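(* There are countably infinitely many pairwise distinct quasi-varieties $\mathbb{V}$ (in the signature $(\wedge,\vee,0,1,\to)$) with $\mathbb{HA}\subseteq\mathbb{V}\subseteq\mathbb{IIL}$, where $\mathbb{HA}$ is the variety of Heyting algebras and $\mathbb{IIL}$ the quasi-variety of integral implicative lattices.
   Context: An integral implicative lattice is a bounded lattice $(L,\le,\wedge,\vee,0,1)$ with a binary operation $\to$ satisfying, for all $a,b,c$: (A1) $(a\vee b)\to c=(a\to c)\wedge(b\to c)$; (A2) $a\to(b\wedge c)=(a\to b)\wedge(a\to c)$; (A3) $a\le b$ iff $1\le a\to b$. $\mathbb{IIL}$ denotes the quasi-variety of integral implicative lattices. A Heyting algebra is a bounded lattice with $\to$ satisfying (A1)–(A3), distributivity, and (H1) $a\wedge(a\to b)\le b$, (H2) $b\le a\to(a\wedge b)$; $\mathbb{HA}$ denotes the variety of Heyting algebras, regarded as a subclass of $\mathbb{IIL}$. *)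

From Stdlib Require Import List.
Import ListNotations.

Record Alg : Type := mkAlg {
  car : Type;
  meet : car -> car -> car;
  join : car -> car -> car;
  bot : car;
  top : car;
  imp : car -> car -> car
}.

Definition AlgClass := Alg -> Prop.

Inductive term : Type :=
| tVar : nat -> term
| tMeet : term -> term -> term
| tJoin : term -> term -> term
| tBot : term
| tTop : term
| tImp : term -> term -> term.

Fixpoint eval (A : Alg) (v : nat -> car A) (t : term) : car A :=
  match t with
  | tVar n => v n
  | tMeet s u => meet A (eval A v s) (eval A v u)
  | tJoin s u => join A (eval A v s) (eval A v u)
  | tBot => bot A
  | tTop => top A
  | tImp s u => imp A (eval A v s) (eval A v u)
  end.

(* A quasi-identity: (s1 = t1 & ... & sk = tk) => s = t. *)
Record quasi_identity : Type := mkQI {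
  qi_hyps : list (term * term);
  qi_concl : term * term
}.

Definition satisfies (A : Alg) (q : quasi_identity) : Prop :=
  forall v : nat -> car A,
    (forall e, In e (qi_hyps q) -> eval A v (fst e) = eval A v (snd e)) ->
    eval A v (fst (qi_concl q)) = eval A v (snd (qi_concl q)).

Definition quasivariety (V : AlgClass) : Prop :=
  exists Q : quasi_identity -> Prop,
    forall A : Alg, V A <-> (forall q, Q q -> satisfies A q).

Section LatAx.
Variable A : Alg.
Local Notation "x ∧ y" := (meet A x y) (at level 40, left associativity).
Local Notation "x ∨ y" := (join A x y) (at level 50, left associativity).
Local Notation "x ⇒ y" := (imp A x y) (at level 55, right associativity).

Definition le (x y : car A) : Prop := x ∧ y = x.

Definition is_bounded_lattice : Prop :=
  (forall x y z, x ∧ (y ∧ z) = (x ∧ y) ∧ z) /\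
  (forall x y z, x ∨ (y ∨ z) = (x ∨ y) ∨ z) /\
  (forall x y, x ∧ y = y ∧ x) /\
  (forall x y, x ∨ y = y ∨ x) /\
  (forall x y, x ∧ (x ∨ y) = x) /\
  (forall x y, x ∨ (x ∧ y) = x) /\
  (forall x, x ∧ top A = x) /\
  (forall x, x ∨ bot A = x).

Definition is_distributive : Prop :=
  forall x y z, x ∧ (y ∨ z) = (x ∧ y) ∨ (x ∧ z).

Definition axA1 : Prop := forall a b c, (a ∨ b) ⇒ c = (a ⇒ c) ∧ (b ⇒ c).
Definition axA2 : Prop := forall a b c, a ⇒ (b ∧ c) = (a ⇒ b) ∧ (a ⇒ c).
Definition axA3 : Prop := forall a b, le a b <-> le (top A) (a ⇒ b).
Definition axH1 : Prop := forall a b, le (a ∧ (a ⇒ b)) b.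
Definition axH2 : Prop := forall a b, le b (a ⇒ (a ∧ b)).
End LatAx.

Definition IIL : AlgClass := fun A =>
  is_bounded_lattice A /\ axA1 A /\ axA2 A /\ axA3 A.

Definition HA : AlgClass := fun A =>
  is_bounded_lattice A /\ is_distributive A /\
  axA1 A /\ axA2 A /\ axA3 A /\ axH1 A /\ axH2 A.

Definition same_class (V W : AlgClass) : Prop := forall A, V A <-> W A.

(* Let [1 ⇒^k x] denote [1 ⇒ (1 ⇒ ... (1 ⇒ x))] with k arrows. Adding to the
   axioms of IIL the identity [1 ⇒^(n+1) x = 1 ⇒^n x] gives a quasi-variety
   V_n, and every V_n contains HA because [1 ⇒ x = x] in a Heyting algebra.
   The chain 0 < 1 < ... < N with [a ⇒ b = N] for [a <= b] and [a ⇒ b = b - 1]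
   otherwise is in IIL, and there [1 ⇒^k a = a - k] for [a < N]; hence it lies
   in V_n exactly when [N <= n + 1], which separates all the V_n. *)

From Stdlib Require Import List Arith Lia Eqdep_dec.
Import ListNotations.

Lemma quasivariety_satisfies (V : AlgClass) (q : quasi_identity) :
  quasivariety V -> quasivariety (fun A => V A /\ satisfies A q).
Proof.
  intros [Q HQ]. exists (fun q' => Q q' \/ q' = q). intros A. rewrite HQ.
  split.
  - intros [HV Hq] q' [Hq' | ->]; auto.
  - intros H. split; auto.
Qed.

Definition x0 := tVar 0.
Definition x1 := tVar 1.
Definition x2 := tVar 2.

Definition IIL_axioms : list quasi_identity := [
  mkQI [] (tMeet x0 (tMeet x1 x2), tMeet (tMeet x0 x1) x2);
  mkQI [] (tJoin x0 (tJoin x1 x2), tJoin (tJoin x0 x1) x2);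
  mkQI [] (tMeet x0 x1, tMeet x1 x0);
  mkQI [] (tJoin x0 x1, tJoin x1 x0);
  mkQI [] (tMeet x0 (tJoin x0 x1), x0);
  mkQI [] (tJoin x0 (tMeet x0 x1), x0);
  mkQI [] (tMeet x0 tTop, x0);
  mkQI [] (tJoin x0 tBot, x0);
  mkQI [] (tImp (tJoin x0 x1) x2, tMeet (tImp x0 x2) (tImp x1 x2));
  mkQI [] (tImp x0 (tMeet x1 x2), tMeet (tImp x0 x1) (tImp x0 x2));
  mkQI [(tMeet x0 x1, x0)] (tMeet tTop (tImp x0 x1), tTop);
  mkQI [(tMeet tTop (tImp x0 x1), tTop)] (tMeet x0 x1, x0)].

Definition valuation3 (A : Alg) (a b c : car A) : nat -> car A :=
  fun k => match k with 0 => a | 1 => b | _ => c end.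

Lemma IIL_satisfies_axioms (A : Alg) :
  IIL A -> forall q, In q IIL_axioms -> satisfies A q.
Proof.
  intros ((l1 & l2 & l3 & l4 & l5 & l6 & l7 & l8) & A1 & A2 & A3) q Hq.
  unfold axA3, le in A3.
  simpl in Hq; repeat destruct Hq as [<- | Hq]; try contradiction;
    intros v Hv; simpl in *; auto.
  - apply (proj1 (A3 _ _)), (Hv _ (or_introl eq_refl)).
  - apply (proj2 (A3 _ _)), (Hv _ (or_introl eq_refl)).
Qed.

Lemma satisfies_axioms_IIL (A : Alg) :
  (forall q, In q IIL_axioms -> satisfies A q) -> IIL A.
Proof.
  intros H.
  assert (Hi : forall i q, nth_error IIL_axioms i = Some q -> satisfies A q).
  { intros i q Hi. apply H. eapply nth_error_In; eauto. }
  unfold IIL, is_bounded_lattice, axA1, axA2, axA3, le.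
  repeat split; intros.
  - exact (Hi 0 _ eq_refl (valuation3 A x y z) ltac:(simpl; tauto)).
  - exact (Hi 1 _ eq_refl (valuation3 A x y z) ltac:(simpl; tauto)).
  - exact (Hi 2 _ eq_refl (valuation3 A x y x) ltac:(simpl; tauto)).
  - exact (Hi 3 _ eq_refl (valuation3 A x y x) ltac:(simpl; tauto)).
  - exact (Hi 4 _ eq_refl (valuation3 A x y x) ltac:(simpl; tauto)).
  - exact (Hi 5 _ eq_refl (valuation3 A x y x) ltac:(simpl; tauto)).
  - exact (Hi 6 _ eq_refl (valuation3 A x x x) ltac:(simpl; tauto)).
  - exact (Hi 7 _ eq_refl (valuation3 A x x x) ltac:(simpl; tauto)).
  - exact (Hi 8 _ eq_refl (valuation3 A a b c) ltac:(simpl; tauto)).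
  - exact (Hi 9 _ eq_refl (valuation3 A a b c) ltac:(simpl; tauto)).
  - apply (Hi 10 _ eq_refl (valuation3 A a b a)). simpl. intros e [<- | []]. assumption.
  - apply (Hi 11 _ eq_refl (valuation3 A a b a)). simpl. intros e [<- | []]. assumption.
Qed.

Lemma IIL_quasivariety : quasivariety IIL.
Proof.
  exists (fun q => In q IIL_axioms). intros A. split.
  - apply IIL_satisfies_axioms.
  - apply satisfies_axioms_IIL.
Qed.

Lemma HA_IIL (A : Alg) : HA A -> IIL A.
Proof. intros (L & _ & A1 & A2 & A3 & _). exact (conj L (conj A1 (conj A2 A3))). Qed.

Lemma HA_top_imp (A : Alg) : HA A -> forall x, imp A (top A) x = x.
Proof.
  intros ((_ & _ & meetC & _ & _ & _ & meet_top & _) & _ & _ & _ & _ & H1 & H2) x.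
  unfold axH1, axH2, le in *.
  specialize (H1 (top A) x). specialize (H2 (top A) x).
  rewrite (meetC (top A)), meet_top in H1, H2.
  rewrite <- H1, meetC. exact H2.
Qed.

Fixpoint top_imps (k : nat) : term :=
  match k with 0 => x0 | S k => tImp tTop (top_imps k) end.

Definition top_imps_stable (n : nat) : quasi_identity :=
  mkQI [] (top_imps (S n), top_imps n).

Definition IIL_stable (n : nat) : AlgClass :=
  fun A => IIL A /\ satisfies A (top_imps_stable n).

Lemma eval_top_imps_id (A : Alg) (v : nat -> car A) k :
  (forall x, imp A (top A) x = x) -> eval A v (top_imps k) = v 0.
Proof. intros Htop. induction k as [|k IH]; simpl; [reflexivity | now rewrite IH, Htop]. Qed.

Lemma HA_IIL_stable n (A : Alg) : HA A -> IIL_stable n A.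
Proof.
  intros HA_A. split; [exact (HA_IIL A HA_A) |].
  intros v _. cbn [top_imps_stable qi_concl fst snd].
  now rewrite !eval_top_imps_id by exact (HA_top_imp A HA_A).
Qed.

Definition chain (N : nat) := {k : nat | Nat.leb k N = true}.

Definition clamp (N k : nat) : chain N :=
  exist _ (Nat.min k N) (proj2 (Nat.leb_le _ _) (Nat.le_min_r k N)).

Lemma chain_eq N (x y : chain N) : proj1_sig x = proj1_sig y -> x = y.
Proof.
  destruct x as [x Hx], y as [y Hy]; simpl; intros ->.
  f_equal; apply UIP_dec, Bool.bool_dec.
Qed.

Lemma chain_bounded N (x : chain N) : proj1_sig x <= N.
Proof. apply Nat.leb_le, proj2_sig. Qed.

(* Subtraction is truncated, so [a ⇒ 0 = 0] for [a > 0]. *)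
Definition Chain (N : nat) : Alg :=
  mkAlg (chain N)
    (fun a b => clamp N (Nat.min (proj1_sig a) (proj1_sig b)))
    (fun a b => clamp N (Nat.max (proj1_sig a) (proj1_sig b)))
    (clamp N 0) (clamp N N)
    (fun a b => clamp N (if Nat.leb (proj1_sig a) (proj1_sig b) then N
                         else proj1_sig b - 1)).

Ltac chain_arith N :=
  repeat match goal with
  | x : chain N |- _ => pose proof (chain_bounded N x); destruct x as [x ?]
  | x : car (Chain N) |- _ => pose proof (chain_bounded N x); destruct x as [x ?]
  end;
  simpl in *;
  repeat match goal with |- context [Nat.leb ?a ?b] => destruct (Nat.leb_spec a b) end;
  lia.

Lemma Chain_le N (a b : chain N) :
  le (Chain N) a b <-> proj1_sig a <= proj1_sig b.
Proof.
  unfold le; simpl. split.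
  - intros H. apply (f_equal (@proj1_sig _ _)) in H. chain_arith N.
  - intros H. apply chain_eq. chain_arith N.
Qed.

Lemma Chain_axA3 N : axA3 (Chain N).
Proof. intros a b. rewrite !Chain_le. chain_arith N. Qed.

Lemma Chain_IIL N : IIL (Chain N).
Proof.
  unfold IIL, is_bounded_lattice, axA1, axA2.
  repeat split; try apply Chain_axA3; intros; apply chain_eq; chain_arith N.
Qed.

Lemma Chain_eval_top_imps N k (v : nat -> chain N) :
  proj1_sig (eval (Chain N) v (top_imps k)) =
  if Nat.eqb (proj1_sig (v 0)) N then N else proj1_sig (v 0) - k.
Proof.
  pose proof (chain_bounded N (v 0)).
  induction k as [|k IH]; simpl.
  - destruct (Nat.eqb_spec (proj1_sig (v 0)) N); lia.
  - rewrite IH. destruct (Nat.eqb_spec (proj1_sig (v 0)) N); chain_arith N.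
Qed.

Lemma Chain_IIL_stable N n : IIL_stable n (Chain N) <-> N <= S n.
Proof.
  unfold IIL_stable. split.
  - intros [_ H]. specialize (H (fun _ => clamp N (N - 1)) ltac:(simpl; tauto)).
    apply (f_equal (@proj1_sig _ _)) in H. cbn [top_imps_stable qi_concl fst snd] in H.
    rewrite !Chain_eval_top_imps in H. simpl in H.
    destruct (Nat.eqb_spec (Nat.min (N - 1) N) N); lia.
  - intros HN. split; [apply Chain_IIL |]. intros v _. apply chain_eq. cbn [top_imps_stable qi_concl fst snd].
    rewrite !Chain_eval_top_imps. pose proof (chain_bounded N (v 0)).
    destruct (Nat.eqb_spec (proj1_sig (v 0)) N); lia.
Qed.

Lemma IIL_stable_inj m n : same_class (IIL_stable m) (IIL_stable n) -> m = n.
Proof.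
  intros Hsame.
  assert (Hm := proj1 (Hsame (Chain (S m))) (proj2 (Chain_IIL_stable _ _) (le_n _))).
  assert (Hn := proj2 (Hsame (Chain (S n))) (proj2 (Chain_IIL_stable _ _) (le_n _))).
  rewrite Chain_IIL_stable in Hm, Hn. lia.
Qed.

Theorem lemma2p3 :
  exists V : nat -> AlgClass,
    (forall n, quasivariety (V n)) /\
    (forall n A, HA A -> V n A) /\
    (forall n A, V n A -> IIL A) /\
    (forall m n, m <> n -> ~ same_class (V m) (V n)).
Proof.
  exists IIL_stable. split; [| split; [| split]].
  - intros n. exact (quasivariety_satisfies _ _ IIL_quasivariety).
  - exact HA_IIL_stable.
  - intros n A [IIL_A _]. exact IIL_A.
  - intros m n Hmn Hsame. exact (Hmn (IIL_stable_inj m n Hsame)).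
Qed.
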